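(* Let $(X,Y)$ be a random pair with $X\in\mathcal{X}\subset\mathbb{R}^d$ and $Y\in\{0,1\}$. Let $\hat f_0,\hat f_1$ be estimates of the class-conditional densities of $X\mid(Y=0)$ and $X\mid(Y=1)$, and let $\hat\pi_0,\hat\pi_1=1-\hat\pi_0$ be estimates of the class priors, and define $$\hat\eta(X)=\frac{\hat f_1(X)\hat\pi_1}{\hat f_0(X)\hat\pi_0+\hat f_1(X)\hat\pi_1}.$$ Let $\hat\phi_{\mathrm{NP}}(X)=\mathbb{1}(\hat\eta(X)>t_{\mathrm{NP}})$ be a level-$\alpha$ NP classifier with threshold $0\le t_{\mathrm{NP}}\le 1$. Assign the type I error cost $$c_0=c_0(t_{\mathrm{NP}},\hat\pi_0)=\frac{t_{\mathrm{NP}}\hat\pi_0}{(1-t_{\mathrm{NP}})(1-\hat\pi_0)+t_{\mathrm{NP}}\hat\pi_0},\qquad c_1=1-c_0,$$ and define the rebalanced score $$\tilde\eta(X)=\frac{\hat f_1(X)c_1}{\hat f_0(X)c_0+\hat f_1(X)c_1}.$$ Then the rebalancing cost-sensitive classifier $\hat\phi^{\mathrm r}_{\mathrm{CS}}(X)=\mathbb{1}(\tilde\eta(X)>1/2)$ coincides with $\hat\phi_{\mathrm{NP}}(X)$ for all $X$. That is, $R_0(\hat\phi^{\mathrm r}_{\mathrm{CS}})\le\alpha$ with high probability.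
   Context: For a classifier $\phi:\mathcal{X}\to\{0,1\}$, the population type I error is $R_0(\phi)=\mathbb{P}(\phi(X)=1\mid Y=0)$ and the type II error is $R_1(\phi)=\mathbb{P}(\phi(X)=0\mid Y=1)$. In the rebalancing cost-sensitive approach, the misclassification costs $c_0$ (of type I error) and $c_1$ (of type II error), normalized so that $c_0+c_1=1$, replace the estimated class priors in the plug-in posterior. A level-$\alpha$ NP (Neyman–Pearson) classifier is a data-dependent classifier whose population type I error satisfies $R_0\le\alpha$ with high probability (i.e., with probability at least $1-\delta$ for a prespecified violation rate $\delta$), here obtained by thresholding the score $\hat\eta$ at a data-selected threshold $t_{\mathrm{NP}}$ (an order statistic of scores on a left-out class-0 sample). *)

From mathcomp Require Import all_boot all_order all_algebra.
Set Implicit Arguments. Unset Strict Implicit. Unset Printing Implicit Defensive.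
Import Order.TTheory GRing.Theory Num.Theory.
Local Open Scope ring_scope.

Section Defs.
Variables (R : realFieldType) (T : Type).

Definition eta_hat (f0 f1 : T -> R) (pi0 : R) (x : T) : R :=
  f1 x * (1 - pi0) / (f0 x * pi0 + f1 x * (1 - pi0)).

Definition phi_NP (f0 f1 : T -> R) (pi0 tNP : R) (x : T) : bool :=
  tNP < eta_hat f0 f1 pi0 x.

Definition cost0 (tNP pi0 : R) : R :=
  tNP * pi0 / ((1 - tNP) * (1 - pi0) + tNP * pi0).

Definition eta_tilde (f0 f1 : T -> R) (c0 : R) (x : T) : R :=
  f1 x * (1 - c0) / (f0 x * c0 + f1 x * (1 - c0)).

Definition phi_CS_r (f0 f1 : T -> R) (pi0 tNP : R) (x : T) : bool :=
  2^-1 < eta_tilde f0 f1 (cost0 tNP pi0) x.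

End Defs.

(** Both classifiers threshold a ratio [u / (v + u)] of nonnegative weights, and
    [s < u / (v + u)] is equivalent to [s * v < (1 - s) * u].  Hence
    [phi_NP] fires iff [t pi0 f0 < (1 - t) (1 - pi0) f1], and [phi_CS_r]
    fires iff [c0 f0 < c1 f1].  The costs are exactly [t pi0] and
    [(1 - t) (1 - pi0)] divided by their (positive) sum, so the two
    conditions agree. *)

From mathcomp Require Import all_boot all_order all_algebra.
From mathcomp Require Import ring lra.
Import Order.TTheory GRing.Theory Num.Theory.
Local Open Scope ring_scope.

Section RatioThreshold.
Variable R : realFieldType.

Lemma ltr_share (s u v : R) : 0 <= s <= 1 -> 0 <= u -> 0 <= v ->
  (s < u / (v + u)) = (s * v < (1 - s) * u).
Proof.
case/andP=> s0 s1 u0 v0.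
have [vu0 | vu_neq0] := eqVneq (v + u) 0.
  (* then [u = v = 0] and [u / (v + u) = 0 / 0 = 0] *)
  have /andP[/eqP-> /eqP->] : (v == 0) && (u == 0) by rewrite -paddr_eq0 // vu0.
  by rewrite addr0 invr0 !mulr0 ltxx ltNge s0.
have vu_gt0 : 0 < v + u by rewrite lt_def vu_neq0 addr_ge0.
by rewrite ltr_pdivlMr //; apply/idP/idP => h; nra.
Qed.

Lemma ltr_half_share (u v : R) : 0 <= u -> 0 <= v -> (2^-1 < u / (v + u)) = (v < u).
Proof.
move=> u0 v0; rewrite ltr_share //; last by apply/andP; split; lra.
have -> : 1 - 2^-1 = 2^-1 :> R by field.
by rewrite ltr_pM2l ?invr_gt0 ?ltr0n.
Qed.

End RatioThreshold.

Section Costs.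
Variables (R : realFieldType) (tNP pi0 : R).
Hypotheses (hpi0 : 0 < pi0 < 1) (ht : 0 <= tNP <= 1).

Let D := (1 - tNP) * (1 - pi0) + tNP * pi0.

Lemma cost0_denom_gt0 : 0 < D.
Proof.
case/andP: hpi0 => p0 p1; case/andP: ht => t0 t1; rewrite /D.
have [-> | t_neq0] := eqVneq tNP 0; first lra.
have t_gt0 : 0 < tNP by rewrite lt_def t_neq0 t0.
nra.
Qed.

Lemma one_sub_cost0 : 1 - cost0 tNP pi0 = (1 - tNP) * (1 - pi0) / D.
Proof.
have := cost0_denom_gt0; rewrite /cost0 /D => /lt0r_neq0 D_neq0.
by field.
Qed.

Lemma cost0_ge0 : 0 <= cost0 tNP pi0.
Proof.
case/andP: hpi0 => p0 _; case/andP: ht => t0 _.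
apply: divr_ge0; last exact: ltW cost0_denom_gt0.
by rewrite mulr_ge0 // ltW.
Qed.

Lemma one_sub_cost0_ge0 : 0 <= 1 - cost0 tNP pi0.
Proof.
case/andP: hpi0 => _ p1; case/andP: ht => _ t1.
rewrite one_sub_cost0; apply: divr_ge0; last exact: ltW cost0_denom_gt0.
by rewrite mulr_ge0 // subr_ge0 // ltW.
Qed.

Lemma ltr_cost_weights (a b : R) :
  (b * cost0 tNP pi0 < a * (1 - cost0 tNP pi0)) =
  (tNP * (b * pi0) < (1 - tNP) * (a * (1 - pi0))).
Proof.
have D_gt0 := cost0_denom_gt0.
rewrite one_sub_cost0 /cost0 -/D !mulrA ltr_pM2r ?invr_gt0 //.
by rewrite (mulrC b) (mulrC a).
Qed.

End Costs.

Theorem proposition2 (R : realFieldType) (d : nat)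
  (f0 f1 : 'rV[R]_d -> R) (pi0 tNP : R)
  (hf0 : forall x, 0 <= f0 x) (hf1 : forall x, 0 <= f1 x)
  (hpi0 : 0 < pi0 < 1) (ht : 0 <= tNP <= 1) :
  forall x : 'rV[R]_d, phi_CS_r f0 f1 pi0 tNP x = phi_NP f0 f1 pi0 tNP x.
Proof.
move=> x; case/andP: (hpi0) => /ltW pi0_ge0 pi0_lt1.
have pi1_ge0 : 0 <= 1 - pi0 by rewrite subr_ge0 ltW.
rewrite /phi_CS_r /eta_tilde ltr_half_share; last 2 first.
- by rewrite mulr_ge0 ?one_sub_cost0_ge0.
- by rewrite mulr_ge0 ?cost0_ge0.
rewrite ltr_cost_weights // /phi_NP /eta_hat ltr_share //.
- exact: mulr_ge0.
- exact: mulr_ge0.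
Qed.
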